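(* Let $\xi_k(x)=\xi_{k1}x_1+\xi_{k2}x_2+\xi_{k0}$, $k=0,1,2$, be affine functions on $\mathbb{R}^2$, let $E$ be a segment contained in the line $\{x_2=mx_1+q\}$, and assume $\xi_{21}+m\xi_{22}=0$ and $\xi_2>0$ on $E$. Let $h(x)=\frac{\xi_1(x)^2}{\xi_2(x)}+\xi_0(x)+I_E(x)$. Then every piece of the conjugate $h^*$ that is a quadratic polynomial $\zeta_{11}s_1^2+\zeta_{12}s_1s_2+\zeta_{22}s_2^2+\zeta_{10}s_1+\zeta_{01}s_2+\zeta_{00}$ is parabolic, i.e. satisfies $\zeta_{12}^2-4\zeta_{11}\zeta_{22}=0$.
   Context: $I_E$ is the indicator function of $E$ ($0$ on $E$, $+\infty$ outside). The conjugate is $h^*(s)=\sup_{x\in\mathbb{R}^2}(s^Tx-h(x))$, a piecewise function of $s=(s_1,s_2)\in\mathbb{R}^2$ whose pieces are affine or quadratic polynomials. Such rational functions $\xi_1^2/\xi_2+\xi_0$ arise as pieces of the convex envelope of a bivariate quadratic over a polytope, and the restriction to an edge of the polytope on which $\xi_{21}+m\xi_{22}=0$ is the case in which a quadratic expression appears in the conjugate. *)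

From HB Require Import structures.
From mathcomp Require Import all_boot all_order all_algebra.
From mathcomp Require Import all_classical all_reals all_analysis.
Set Implicit Arguments. Unset Strict Implicit. Unset Printing Implicit Defensive.
Import Order.TTheory GRing.Theory Num.Theory.
Local Open Scope classical_set_scope.
Local Open Scope ring_scope.

Definition affine2 {R : realType} (c1 c2 c0 : R) (x : R * R) : R :=
  c1 * x.1 + c2 * x.2 + c0.

Definition segment2 {R : realType} (p r : R * R) : set (R * R) :=
  [set x | exists2 t : R, 0 <= t <= 1 &
     x = (p.1 + t * (r.1 - p.1), p.2 + t * (r.2 - p.2))].

Definition add_indicator {R : realType} (f : R * R -> R) (E : set (R * R))
  (x : R * R) : \bar R :=
  if x \in E then (f x)%:E else +oo%E.

Definition conjugate2 {R : realType} (h : R * R -> \bar R) (s : R * R) : \bar R :=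
  ereal_sup [set ((s.1 * x.1 + s.2 * x.2)%:E - h x)%E | x in [set: R * R]].

Definition quad2 {R : realType} (z11 z12 z22 z10 z01 z00 : R) (s : R * R) : R :=
  z11 * s.1 ^+ 2 + z12 * s.1 * s.2 + z22 * s.2 ^+ 2 + z10 * s.1 + z01 * s.2 + z00.

From HB Require Import structures.
From mathcomp Require Import all_boot all_order all_algebra.
From mathcomp Require Import all_classical all_reals all_analysis.
From mathcomp Require Import ring lra.
Import Order.TTheory GRing.Theory Num.Theory numFieldNormedType.Exports.
Local Open Scope classical_set_scope.
Local Open Scope ring_scope.

(* Since E lies on the line x2 = m x1 + q, moving s along d = (-m, 1) changes
   s^T x by the same amount k q for every x in E, so h^* is affine along d:
   h^*(s + k d) = h^*(s) + k q.  A quadratic piece of h^* on an open set must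
   then have d in the kernel of its Hessian, which is therefore singular. *)

Section ConjugateOnLine.

Variables (R : realType) (f : R * R -> R) (E : set (R * R)).

Lemma conjugate2_le_shift (s t : R * R) (c : R) :
  (forall x, E x -> t.1 * x.1 + t.2 * x.2 = s.1 * x.1 + s.2 * x.2 + c) ->
  (conjugate2 (add_indicator f E) t <= conjugate2 (add_indicator f E) s + c%:E)%E.
Proof.
move=> tE; apply: ge_ereal_sup => _ [x _ <-].
rewrite /add_indicator; case: ifPn => [/set_mem xE|_]; last first.
  by rewrite /= addeNy leNye.
rewrite tE // (_ : _ - _ = (s.1 * x.1 + s.2 * x.2 - f x)%:E + c%:E)%E; last first.
  by rewrite -!EFinD; congr (_%:E); ring.
apply: leeD2r; apply: ereal_sup_ubound; exists x => //.
by rewrite /add_indicator mem_set.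
Qed.

Variables (m q : R).
Hypothesis E_line : forall x, E x -> x.2 = m * x.1 + q.

Lemma conjugate2_shift_line (s : R * R) (k : R) :
  conjugate2 (add_indicator f E) (s.1 - k * m, s.2 + k)
  = (conjugate2 (add_indicator f E) s + (k * q)%:E)%E.
Proof.
apply/eqP; rewrite eq_le conjugate2_le_shift => [|x /E_line /= ->]; last by ring.
rewrite -leeBrDr // -EFinN.
by apply: conjugate2_le_shift => x /E_line /= ->; ring.
Qed.

End ConjugateOnLine.

Lemma segment2_line {R : realType} {m q : R} {p r : R * R} :
  p.2 = m * p.1 + q -> r.2 = m * r.1 + q ->
  forall x, segment2 p r x -> x.2 = m * x.1 + q.
Proof. by move=> hp hr _ [t _ ->] /=; rewrite hp hr; ring. Qed.

Lemma open_box {R : realType} {U : set (R * R)} {s : R * R} :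
  open U -> U s ->
  exists2 e : R, 0 < e & forall a b, `|a| < e -> `|b| < e -> U (s.1 + a, s.2 + b).
Proof.
move=> /[apply] /nbhs_ballP[e /= e0 sU]; exists e => // a b ha hb.
by apply: sU; split; rewrite /= -ball_normE /ball_ /= opprD addNKr normrN.
Qed.

Section QuadraticPiece.

Context {R : realType} {z11 z12 z22 z10 z01 z00 : R}.
Let Q := quad2 z11 z12 z22 z10 z01 z00.

Lemma quad2_second_difference (s u v : R * R) :
  Q (s.1 + u.1 + v.1, s.2 + u.2 + v.2) - Q (s.1 + u.1, s.2 + u.2)
  - (Q (s.1 + v.1, s.2 + v.2) - Q s)
  = 2 * z11 * u.1 * v.1 + z12 * (u.1 * v.2 + u.2 * v.1) + 2 * z22 * u.2 * v.2.
Proof. by rewrite /Q /quad2 /=; ring. Qed.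

Lemma quad2_discriminant_eq0 (m : R) :
  z12 = 2 * m * z11 -> 2 * z22 = m * z12 -> z12 ^+ 2 - 4 * z11 * z22 = 0.
Proof.
move=> h1 h2; have -> : z12 ^+ 2 - 4 * z11 * z22
    = z12 * (z12 - 2 * m * z11) - 2 * z11 * (2 * z22 - m * z12) by ring.
by rewrite -h1 -h2 !subrr; ring.
Qed.

Context {m q : R} {U : set (R * R)}.
Hypotheses (U_open : open U) (U_neq0 : U !=set0).
Hypothesis Q_affine_along : forall s k, U s -> U (s.1 - k * m, s.2 + k) ->
  Q (s.1 - k * m, s.2 + k) = Q s + k * q.

Lemma quad2_polar_eq0 (s u : R * R) (k : R) :
  U s -> U (s.1 + u.1, s.2 + u.2) -> U (s.1 - k * m, s.2 + k) ->
  U (s.1 + u.1 - k * m, s.2 + u.2 + k) ->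
  2 * z11 * u.1 * (- (k * m)) + z12 * (u.1 * k + u.2 * (- (k * m)))
  + 2 * z22 * u.2 * k = 0.
Proof.
move=> Us Usu Usd Usud.
rewrite -(quad2_second_difference s u (- (k * m), k)) /=.
rewrite (Q_affine_along (s.1 + u.1, s.2 + u.2) k) ?(Q_affine_along s k) //.
by rewrite !(addrC _ (k * q)) !addrK subrr.
Qed.

Lemma quad2_hessian_kernel :
  z12 = 2 * m * z11 /\ 2 * z22 = m * z12.
Proof.
have [s Us] := U_neq0; have [e e0 sU] := open_box U_open Us.
pose t := e / (3 + `|m|).
have m3 : 0 < 3 + `|m| by rewrite ltr_pwDl.
have t0 : 0 < t by rewrite divr_gt0.
have tm0 : 0 <= t * `|m| := mulr_ge0 (ltW t0) (normr_ge0 m).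
have tm : `|t * m| = t * `|m| by rewrite normrM gtr0_norm.
have t_small : 2 * t + t * `|m| < e.
  have : t * 3 + t * `|m| = e by rewrite -mulrDr divfK ?gt_eqF.
  lra.
have inU a b : `|a| <= t + t * `|m| -> `|b| <= 2 * t -> U (s.1 + a, s.2 + b).
  by move=> ha hb; apply: sU; lra.
have polar_eq0 (u : R * R) : `|u.1| <= t -> `|u.2| <= t ->
    2 * z11 * u.1 * (- (t * m)) + z12 * (u.1 * t + u.2 * (- (t * m)))
    + 2 * z22 * u.2 * t = 0.
  move=> u1 u2; apply: (quad2_polar_eq0 _ _ _ Us); rewrite -?addrA; apply: inU;
    (try apply: le_trans (ler_normD _ _) _); rewrite ?normrN ?tm ?(gtr0_norm t0); lra.
have t_le : `|t| <= t by rewrite gtr0_norm.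
have zero_le : `|0 : R| <= t by rewrite normr0 ltW.
have /= h1 := polar_eq0 (t, 0) t_le zero_le.
have /= h2 := polar_eq0 (0, t) zero_le t_le.
have tt_neq0 : t * t != 0 by rewrite mulf_neq0 ?gt_eqF.
split; apply: (mulIf tt_neq0); apply/eqP; rewrite -subr_eq0; apply/eqP.
- by rewrite -h1; ring.
- by rewrite -h2; ring.
Qed.

End QuadraticPiece.

Theorem proposition4 (R : realType)
  (x01 x02 x00 x11 x12 x10 x21 x22 x20 : R) (m q : R) (p r : R * R)
  (hp : p.2 = m * p.1 + q) (hr : r.2 = m * r.1 + q)
  (hxi : x21 + m * x22 = 0)
  (hpos : forall x, segment2 p r x -> 0 < affine2 x21 x22 x20 x)
  (U : set (R * R)) (hU : open U) (hU0 : U !=set0)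
  (z11 z12 z22 z10 z01 z00 : R)
  (hpiece : forall s, U s ->
     conjugate2
       (add_indicator
          (fun x => affine2 x11 x12 x10 x ^+ 2 / affine2 x21 x22 x20 x
                    + affine2 x01 x02 x00 x)
          (segment2 p r)) s
     = (quad2 z11 z12 z22 z10 z01 z00 s)%:E) :
  z12 ^+ 2 - 4 * z11 * z22 = 0.
Proof.
have quad_affine_along s k : U s -> U (s.1 - k * m, s.2 + k) ->
    quad2 z11 z12 z22 z10 z01 z00 (s.1 - k * m, s.2 + k)
    = quad2 z11 z12 z22 z10 z01 z00 s + k * q.
  move=> Us Usk; apply: EFin_inj; rewrite [RHS]EFinD -!hpiece //.
  exact/conjugate2_shift_line/(segment2_line hp hr).
have [h1 h2] := quad2_hessian_kernel hU hU0 quad_affine_along.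
exact: quad2_discriminant_eq0 h1 h2.
Qed.
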